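(* Let $\phi:[0,\infty)\to\mathbb{R}$ be a strictly monotonic, not identically zero function of class $C^2([0,\infty))$ such that $\phi(r)=O(r^{-1/2-\alpha})$ as $r\to\infty$ for some $\alpha>0$. Define, for $r>0$, \[ \Phi(r)=-\int_r^{\infty}\phi'(s)^2\, s\,ds,\qquad \xi(r)=r+\int_r^{\infty}\bigl(1-\mathrm{e}^{\Phi(s)}\bigr)\,ds, \] \[ A(r)=2r^2\int_r^{\infty}\frac{\xi(s)-3m}{s^4}\,\mathrm{e}^{\Phi(s)}\,ds,\qquad f(r)=\mathrm{e}^{-2\Phi(r)}A(r), \] where $m$ is a real parameter satisfying $3m>\xi(0)$ (here $\xi(0)=\lim_{r\to0^+}\xi(r)$). Suppose $r_h>0$ is such that $f(r_h)=0$ and $f(r)>0$ for all $r>r_h$ (the event horizon). Then $A$ is strictly increasing on $(r_h,\infty)$.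
   Context: These quadratures give the general static, spherically symmetric, asymptotically flat solution of the Einstein–Klein–Gordon equations for a minimally coupled scalar field $\phi$ with metric $ds^2=A\,dt^2-dr^2/f-r^2(d\theta^2+\sin^2\theta\,d\varphi^2)$, $m$ being the Schwarzschild mass; the case $3m>\xi(0)$ is the scalar field black hole case. A prime denotes $d/dr$. *)

From Stdlib Require Import Reals.
From Coquelicot Require Import Coquelicot.
Open Scope R_scope.

Definition improper_int (g : R -> R) (r : R) : R :=
  real (Lim (fun b => RInt g r b) p_infty).

Definition improper_int_conv (g : R -> R) (r : R) : Prop :=
  ex_finite_lim (fun b => RInt g r b) p_infty.

(* f is of class C^2 on [0,+oo): f, f', f'' exist on (0,+oo) and
   f, f', f'' are continuous on [0,+oo) (right-continuous at 0), i.e. the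
   derivatives extend continuously to the endpoint 0. *)
Definition C2_on_nonneg (f : R -> R) : Prop :=
  exists f1 f2 : R -> R,
    (forall x, 0 < x -> is_derive f x (f1 x)) /\
    (forall x, 0 < x -> is_derive f1 x (f2 x)) /\
    (forall x, 0 < x -> continuous f2 x) /\
    filterlim f (at_right 0) (locally (f 0)) /\
    filterlim f1 (at_right 0) (locally (f1 0)) /\
    filterlim f2 (at_right 0) (locally (f2 0)).

Definition strictly_monotonic_nonneg (f : R -> R) : Prop :=
  (forall x y, 0 <= x -> x < y -> f x < f y) \/
  (forall x y, 0 <= x -> x < y -> f y < f x).

Definition bigO_decay (f : R -> R) (alpha : R) : Prop :=
  exists C R0 : R, 0 < R0 /\
    forall r, R0 <= r -> Rabs (f r) <= C * Rpower r (- (1/2) - alpha).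

Definition PhiF (phi : R -> R) (r : R) : R :=
  - improper_int (fun s => (Derive phi s) ^ 2 * s) r.

Definition xiF (phi : R -> R) (r : R) : R :=
  r + improper_int (fun s => 1 - exp (PhiF phi s)) r.


Definition AF (phi : R -> R) (m : R) (r : R) : R :=
  2 * r ^ 2 *
  improper_int (fun s => (xiF phi s - 3 * m) / s ^ 4 * exp (PhiF phi s)) r.

Definition fF (phi : R -> R) (m : R) (r : R) : R :=
  exp (-2 * PhiF phi r) * AF phi m r.

From Stdlib Require Import Reals Lra Classical.
From Coquelicot Require Import Coquelicot.
Open Scope R_scope.

(* Write J(r) = A(r) / (2 r^2), so that A' = 4 r J - 2 (xi - 3m) e^Phi / r^2 and
   J > 0 wherever A > 0, in particular beyond the horizon.  If xi(r) <= 3m then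
   A'(r) > 0 at once.  Otherwise use that xi' = e^Phi is nondecreasing (Phi' >= 0):
   xi is convex, so xi(s) - 3m >= (xi(r) - 3m) + e^Phi(r) (s - r), and integrating
   gives J(r) >= e^Phi(r) ((xi(r) - 3m) / (3 r^3) + e^Phi(r) / (6 r^2)), whence
   A'(r) >= 2 e^Phi(r) (r e^Phi(r) - xi(r) + 3m) / (3 r^2).  Convexity also gives
   xi(r) - r e^Phi(r) <= xi(0) < 3m, so A'(r) > 0.  Only f > 0 on (r_h, oo) is
   used; the regularity and decay assumptions on phi enter only through the
   continuity of phi' and the convergence of the integrals defining Phi and xi. *)

Lemma exp_le_exp a b : a <= b -> exp a <= exp b.
Proof. intros [Hlt | ->]; [left; now apply exp_increasing | apply Rle_refl]. Qed.

Lemma continuous_of_ex_derive (f : R -> R) x : ex_derive f x -> continuous f x.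
Proof. apply (ex_derive_continuous (K := R_AbsRing) (V := R_NormedModule)). Qed.

Lemma ex_finite_lim_incr_bounded (F : R -> R) (S M : R) :
  (forall a b, S <= a -> a <= b -> F a <= F b) -> (forall b, S <= b -> F b <= M) ->
  ex_finite_lim F p_infty.
Proof.
  intros Hincr Hbnd.
  set (E := fun y => exists b, S <= b /\ y = F b).
  destruct (completeness E) as [l [Hub Hlub]].
  - exists M. intros y [b [Hb ->]]. now apply Hbnd.
  - exists (F S), S. split; [lra | reflexivity].
  - exists l. apply is_lim_spec. intros eps.
    assert (Hnear : exists b0, S <= b0 /\ l - eps < F b0).
    { apply NNPP. intros Hnone.
      assert (l <= l - eps).
      { apply Hlub. intros y [b [Hb ->]]. apply Rnot_lt_le. intros Hlt. apply Hnone. now exists b. }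
      destruct eps; simpl in *; lra. }
    destruct Hnear as [b0 [Hb0 Hl0]].
    exists b0. intros y Hy.
    assert (F b0 <= F y) by (apply Hincr; lra).
    assert (F y <= l) by (apply Hub; exists y; split; [lra | reflexivity]).
    apply Rabs_lt_between. destruct eps; simpl in *; lra.
Qed.

Lemma is_RInt_antiderivative (W w : R -> R) (a b : R) : a <= b ->
  (forall z, a <= z <= b -> is_derive W z (w z) /\ continuous w z) ->
  is_RInt w a b (W b - W a).
Proof.
  intros Hab HW.
  apply (is_RInt_derive (V := R_CompleteNormedModule)); intros z Hz;
    rewrite Rmin_left, Rmax_right in Hz by lra; apply HW, Hz.
Qed.

Section ImproperIntegral.

Variable g : R -> R.
Hypothesis g_cont : forall t, 0 < t -> continuous g t.

Lemma ex_RInt_pos a b : 0 < a -> 0 < b -> ex_RInt g a b.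
Proof.
  intros Ha Hb. apply (ex_RInt_continuous (V := R_CompleteNormedModule)).
  intros z [Hz _]. apply g_cont. eapply Rlt_le_trans; [|exact Hz]. now apply Rmin_glb_lt.
Qed.

Lemma RInt_Chasles_pos r a b : 0 < r -> 0 < a -> 0 < b ->
  RInt g r a + RInt g a b = RInt g r b.
Proof. intros Hr Ha Hb. apply (RInt_Chasles (V := R_CompleteNormedModule)); now apply ex_RInt_pos. Qed.

Lemma is_lim_improper_int r : improper_int_conv g r ->
  is_lim (fun b => RInt g r b) p_infty (improper_int g r).
Proof. intros [l Hl]. unfold improper_int. now rewrite (is_lim_unique _ _ _ Hl). Qed.

Lemma is_lim_RInt_shift r a : 0 < r -> 0 < a -> improper_int_conv g r ->
  is_lim (fun b => RInt g a b) p_infty (improper_int g r - RInt g r a).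
Proof.
  intros Hr Ha Hconv.
  apply is_lim_ext_loc with (fun b => RInt g r b - RInt g r a).
  - exists 0. intros b Hb. rewrite <- (RInt_Chasles_pos r a b) by assumption. ring.
  - eapply is_lim_minus; [now apply is_lim_improper_int | apply is_lim_const | reflexivity].
Qed.

Lemma improper_int_conv_shift r a : 0 < r -> 0 < a -> improper_int_conv g r ->
  improper_int_conv g a.
Proof. intros Hr Ha Hconv. eexists. now apply (is_lim_RInt_shift r). Qed.

Lemma improper_int_shift r a : 0 < r -> 0 < a -> improper_int_conv g r ->
  improper_int g a = improper_int g r - RInt g r a.
Proof.
  intros Hr Ha Hconv. unfold improper_int at 1.
  now rewrite (is_lim_unique _ _ _ (is_lim_RInt_shift r a Hr Ha Hconv)).
Qed.

Lemma is_derive_improper_int x : 0 < x -> improper_int_conv g x ->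
  is_derive (improper_int g) x (- g x).
Proof.
  intros Hx Hconv.
  apply is_derive_ext_loc with (fun t => improper_int g x - RInt g x t).
  - apply (filter_imp (fun t => 0 < t)); [|exact (open_gt 0 x Hx)].
    intros t Ht. symmetry. now apply improper_int_shift.
  - replace (- g x) with (0 - g x) by ring.
    apply (is_derive_minus (fun _ => improper_int g x) (fun t => RInt g x t)).
    + apply (is_derive_const (K := R_AbsRing) (V := R_NormedModule)).
    + apply is_derive_RInt with (a := x).
      * apply (filter_imp (fun t => 0 < t)); [|exact (open_gt 0 x Hx)].
        intros t Ht. apply (RInt_correct (V := R_CompleteNormedModule)). now apply ex_RInt_pos.
      * now apply g_cont.
Qed.

Lemma improper_int_ge0 r : 0 < r -> improper_int_conv g r ->
  (forall s, r < s -> 0 <= g s) -> 0 <= improper_int g r.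
Proof.
  intros Hr Hconv Hpos.
  apply (is_lim_le_loc (fun _ => 0) (fun b => RInt g r b) p_infty 0 (improper_int g r)).
  - exists r. intros b Hb. apply RInt_ge_0; [lra | apply ex_RInt_pos; lra |].
    intros y Hy. apply Hpos. lra.
  - apply is_lim_const.
  - now apply is_lim_improper_int.
Qed.

Lemma improper_int_conv_bounded S M : 0 < S -> (forall s, S <= s -> 0 <= g s) ->
  (forall b, S <= b -> RInt g S b <= M) -> improper_int_conv g S.
Proof.
  intros HS Hpos Hbnd. apply (ex_finite_lim_incr_bounded _ S M); [|exact Hbnd].
  intros a b Ha Hab. rewrite <- (RInt_Chasles_pos S a b) by lra.
  enough (0 <= RInt g a b) by lra.
  apply RInt_ge_0; [lra | apply ex_RInt_pos; lra |]. intros z Hz. apply Hpos. lra.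
Qed.

Lemma improper_int_ge_antiderivative (W w : R -> R) (x L : R) : 0 < x -> improper_int_conv g x ->
  (forall z, x <= z -> is_derive W z (w z) /\ continuous w z /\ w z <= g z) ->
  is_lim W p_infty L -> L - W x <= improper_int g x.
Proof.
  intros Hx Hconv HW HL.
  change (Rbar_le (L - W x) (improper_int g x)).
  apply (is_lim_le_loc (fun b => W b - W x) (fun b => RInt g x b) p_infty (L - W x)).
  - exists x. intros b Hb.
    assert (HI : is_RInt w x b (W b - W x)).
    { apply is_RInt_antiderivative; [lra|]. intros z Hz. split; apply HW; lra. }
    rewrite <- (is_RInt_unique _ _ _ _ HI).
    apply RInt_le; [lra | now exists (W b - W x) | apply ex_RInt_pos; lra |].
    intros z Hz. apply HW. lra.
  - eapply is_lim_minus; [exact HL | apply is_lim_const | reflexivity].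
  - now apply is_lim_improper_int.
Qed.

End ImproperIntegral.

Section Quadratures.

Variable phi : R -> R.
Hypothesis dphi_cont : forall x, 0 < x -> continuous (Derive phi) x.
Hypothesis Phi_conv :
  forall r, 0 < r -> improper_int_conv (fun s => Derive phi s ^ 2 * s) r.
Hypothesis xi_conv :
  forall r, 0 < r -> improper_int_conv (fun s => 1 - exp (PhiF phi s)) r.

Lemma Phi_integrand_cont t : 0 < t -> continuous (fun s => Derive phi s ^ 2 * s) t.
Proof.
  intros Ht.
  apply (continuous_mult (K := R_AbsRing) (fun s => Derive phi s ^ 2) (fun s => s)).
  - apply (continuous_comp (Derive phi) (fun y => y ^ 2)); [now apply dphi_cont |].
    apply continuous_of_ex_derive. auto_derive. easy.
  - apply continuous_id.
Qed.

Lemma is_derive_Phi x : 0 < x -> is_derive (PhiF phi) x (Derive phi x ^ 2 * x).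
Proof.
  intros Hx. unfold PhiF. rewrite <- (Ropp_involutive (Derive phi x ^ 2 * x)).
  apply (is_derive_opp (improper_int (fun s => Derive phi s ^ 2 * s))).
  apply (is_derive_improper_int (fun s => Derive phi s ^ 2 * s)); [exact Phi_integrand_cont | exact Hx | now apply Phi_conv].
Qed.

Lemma Phi_le r s : 0 < r -> r <= s -> PhiF phi r <= PhiF phi s.
Proof.
  intros Hr Hrs. unfold PhiF.
  rewrite (improper_int_shift (fun s => Derive phi s ^ 2 * s) Phi_integrand_cont r s) by (auto; lra).
  enough (0 <= RInt (fun s => Derive phi s ^ 2 * s) r s) by lra.
  apply RInt_ge_0; [exact Hrs | apply ex_RInt_pos; [exact Phi_integrand_cont | lra | lra] |].
  intros z Hz. apply Rmult_le_pos; [apply pow2_ge_0 | lra].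
Qed.

Lemma Phi_le0 r : 0 < r -> PhiF phi r <= 0.
Proof.
  intros Hr. unfold PhiF.
  enough (0 <= improper_int (fun s => Derive phi s ^ 2 * s) r) by lra.
  apply improper_int_ge0; [exact Phi_integrand_cont | exact Hr | now apply Phi_conv |].
  intros s Hs. apply Rmult_le_pos; [apply pow2_ge_0 | lra].
Qed.

Lemma exp_Phi_le1 r : 0 < r -> exp (PhiF phi r) <= 1.
Proof. intros Hr. rewrite <- exp_0. apply exp_le_exp, Phi_le0, Hr. Qed.

Lemma xi_integrand_cont t : 0 < t -> continuous (fun s => 1 - exp (PhiF phi s)) t.
Proof.
  intros Ht. apply continuous_of_ex_derive.
  auto_derive. eexists. now apply is_derive_Phi.
Qed.

Lemma is_derive_xi x : 0 < x -> is_derive (xiF phi) x (exp (PhiF phi x)).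
Proof.
  intros Hx. unfold xiF.
  replace (exp (PhiF phi x)) with (1 + - (1 - exp (PhiF phi x))) by ring.
  apply (is_derive_plus (fun r => r) (improper_int (fun s => 1 - exp (PhiF phi s)))).
  - apply (is_derive_id (K := R_AbsRing)).
  - apply (is_derive_improper_int (fun s => 1 - exp (PhiF phi s)));
      [exact xi_integrand_cont | exact Hx | now apply xi_conv].
Qed.

(* [xi' = exp Phi] is nondecreasing, i.e. [xi] is convex. *)
Lemma xi_increment_bounds r s : 0 < r -> r <= s ->
  exp (PhiF phi r) * (s - r) <= xiF phi s - xiF phi r <= exp (PhiF phi s) * (s - r).
Proof.
  intros Hr Hrs.
  destruct (MVT_gen (xiF phi) r s (fun t => exp (PhiF phi t))) as [t [Ht Heq]].
  - intros z Hz. rewrite Rmin_left in Hz by lra. apply is_derive_xi. lra.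
  - intros z Hz. rewrite Rmin_left in Hz by lra.
    apply continuity_pt_filterlim, continuous_of_ex_derive.
    eexists. apply is_derive_xi. lra.
  - rewrite Rmin_left, Rmax_right in Ht by lra. rewrite Heq.
    split; apply Rmult_le_compat_r; try lra; apply exp_le_exp, Phi_le; lra.
Qed.

Lemma xi_ge_id r : 0 < r -> r <= xiF phi r.
Proof.
  intros Hr. unfold xiF.
  enough (0 <= improper_int (fun s => 1 - exp (PhiF phi s)) r) by lra.
  apply improper_int_ge0; [exact xi_integrand_cont | exact Hr | now apply xi_conv |].
  intros s Hs. assert (exp (PhiF phi s) <= 1) by (apply exp_Phi_le1; lra). lra.
Qed.

Lemma xi_sub_id_le r s : 0 < r -> r <= s -> xiF phi s - s <= xiF phi r - r.
Proof.
  intros Hr Hrs. destruct (xi_increment_bounds r s Hr Hrs) as [_ Hup].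
  assert (exp (PhiF phi s) <= 1) by (apply exp_Phi_le1; lra). nra.
Qed.

Lemma xi_sub_le_lim (xi0 r : R) : filterlim (xiF phi) (at_right 0) (locally xi0) -> 0 < r ->
  xiF phi r - r * exp (PhiF phi r) <= xi0.
Proof.
  intros Hxi Hr.
  apply (closed_filterlim_loc (xiF phi) (fun u => xiF phi r - r * exp (PhiF phi r) <= u) xi0 Hxi);
    [| apply closed_ge].
  exists (mkposreal r Hr). intros e He Hepos.
  unfold ball in He; simpl in He; unfold AbsRing_ball, abs, minus, plus, opp in He; simpl in He.
  apply Rabs_lt_between in He.
  destruct (xi_increment_bounds e r Hepos ltac:(lra)) as [_ Hup].
  generalize (exp_pos (PhiF phi r)). nra.
Qed.
Variable m : R.

Let A_integrand s := (xiF phi s - 3 * m) / s ^ 4 * exp (PhiF phi s).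

Lemma A_integrand_cont t : 0 < t -> continuous A_integrand t.
Proof.
  intros Ht. apply continuous_of_ex_derive.
  assert (0 < t ^ 4) by now apply pow_lt.
  unfold A_integrand. auto_derive. repeat split.
  - eexists. now apply is_derive_xi.
  - simpl in *. lra.
  - eexists. now apply is_derive_Phi.
Qed.

Lemma A_integrand_bound : exists S K, 1 <= S /\
  forall s, S <= s -> 0 <= A_integrand s <= K / s ^ 2.
Proof.
  set (S := Rmax 1 (3 * m)).
  set (D := xiF phi S - S - 3 * m).
  assert (HS1 : 1 <= S) by apply Rmax_l.
  assert (HSm : 3 * m <= S) by apply Rmax_r.
  exists S, (1 + Rabs D). split; [exact HS1 |]. intros s Hs.
  assert (Hs2 : 0 < s ^ 2) by (apply pow_lt; lra).
  assert (Hxi_lo : s <= xiF phi s) by (apply xi_ge_id; assumption || lra).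
  assert (Hxi_up : xiF phi s - s <= xiF phi S - S) by (apply xi_sub_id_le; lra).
  assert (HE : 0 < exp (PhiF phi s) <= 1) by (split; [apply exp_pos | apply exp_Phi_le1; lra]).
  assert (HD : D <= Rabs D) by apply Rle_abs.
  unfold A_integrand.
  replace ((xiF phi s - 3 * m) / s ^ 4 * exp (PhiF phi s))
    with ((xiF phi s - 3 * m) * exp (PhiF phi s) / s ^ 2 / s ^ 2) by (field; lra).
  split.
  - apply Rdiv_le_0_compat; [apply Rdiv_le_0_compat |]; [apply Rmult_le_pos | |]; lra.
  - apply Rmult_le_compat_r; [left; now apply Rinv_0_lt_compat |].
    apply Rle_div_l; [exact Hs2 |].
    assert (s <= s ^ 2) by nra.
    assert (Rabs D <= Rabs D * s ^ 2) by (generalize (Rabs_pos D); nra).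
    assert (xiF phi s - 3 * m <= s + D) by (unfold D; lra).
    assert ((xiF phi s - 3 * m) * exp (PhiF phi s) <= xiF phi s - 3 * m) by nra.
    nra.
Qed.

(* [AF] is only meaningful if this integral converges, which is not assumed:
   the integrand is [O(1/s^2)] because [xi s - s] is nonincreasing. *)
Lemma A_integrand_conv r : 0 < r -> improper_int_conv A_integrand r.
Proof.
  intros Hr. destruct A_integrand_bound as [S [K [HS Hbnd]]].
  apply (improper_int_conv_shift _ A_integrand_cont S); [lra | exact Hr |].
  apply (improper_int_conv_bounded _ A_integrand_cont S (K / S)); [lra | apply Hbnd |].
  intros b Hb.
  assert (HI : is_RInt (fun s => K / s ^ 2) S b ((fun s => - K / s) b - (fun s => - K / s) S)).
  { apply is_RInt_antiderivative; [exact Hb |]. intros z Hz. split.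
    - auto_derive; [lra | field; lra].
    - apply continuous_of_ex_derive.
      auto_derive. assert (0 < z ^ 2) by (apply pow_lt; lra). simpl in *. lra. }
  apply Rle_trans with (RInt (fun s => K / s ^ 2) S b).
  - apply RInt_le; [exact Hb | apply ex_RInt_pos; [exact A_integrand_cont | lra | lra] |
      eexists; exact HI |].
    intros z Hz. apply Hbnd. lra.
  - rewrite (is_RInt_unique _ _ _ _ HI).
    assert (0 <= K / b).
    { replace (K / b) with (K / b ^ 2 * b) by (field; lra).
      apply Rmult_le_pos; [apply Rle_trans with (A_integrand b); apply Hbnd | ]; lra. }
    unfold Rdiv in *. lra.
Qed.

Lemma is_derive_A x : 0 < x ->
  is_derive (AF phi m) x (4 * x * improper_int A_integrand x - 2 * x ^ 2 * A_integrand x).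
Proof.
  intros Hx. unfold AF. fold A_integrand.
  replace (4 * x * improper_int A_integrand x - 2 * x ^ 2 * A_integrand x) with
    (4 * x * improper_int A_integrand x + 2 * x ^ 2 * - A_integrand x) by ring.
  apply (is_derive_mult (fun r => 2 * r ^ 2) (improper_int A_integrand)).
  - auto_derive; [easy | ring].
  - apply is_derive_improper_int; [exact A_integrand_cont | exact Hx | now apply A_integrand_conv].
  - intros; apply Rmult_comm.
Qed.

(* The convexity of [xi] bounds [xi s - 3 m] below by the tangent line at [x]. *)
Lemma A_integral_lower_bound x : 0 < x -> 0 < xiF phi x - 3 * m ->
  exp (PhiF phi x) * ((xiF phi x - 3 * m) / (3 * x ^ 3) + exp (PhiF phi x) / (6 * x ^ 2))
  <= improper_int A_integrand x.
Proof.
  intros Hx Hu.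
  assert (HE : 0 < exp (PhiF phi x)) by apply exp_pos.
  set (E := exp (PhiF phi x)) in *. set (u := xiF phi x - 3 * m) in *.
  set (P := fun t => - E * (u - E * x) / 3 * t ^ 3 - E ^ 2 / 2 * t ^ 2).
  assert (HP : is_lim (fun s => P (/ s)) p_infty (P 0)).
  { apply is_lim_comp_continuous.
    - apply (is_lim_inv (fun y => y) p_infty p_infty (is_lim_id p_infty)). discriminate.
    - apply continuous_of_ex_derive.
      unfold P. auto_derive. easy. }
  replace (E * (u / (3 * x ^ 3) + E / (6 * x ^ 2))) with (P 0 - P (/ x))
    by (unfold P; field; lra).
  apply (improper_int_ge_antiderivative _ A_integrand_cont (fun s => P (/ s))
           (fun s => E * (u + E * (s - x)) / s ^ 4));
    [exact Hx | now apply A_integrand_conv | | exact HP].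
  intros z Hz. assert (Hz4 : 0 < z ^ 4) by (apply pow_lt; lra).
  split; [| split].
  - unfold P. auto_derive; [lra | field; lra].
  - apply continuous_of_ex_derive.
    auto_derive. simpl in Hz4. lra.
  - destruct (xi_increment_bounds x z Hx Hz) as [Hinc _].
    assert (HEz : E <= exp (PhiF phi z)) by (apply exp_le_exp, Phi_le; auto; lra).
    fold E in Hinc. unfold A_integrand, Rdiv.
    replace ((xiF phi z - 3 * m) * / z ^ 4 * exp (PhiF phi z))
      with (exp (PhiF phi z) * (xiF phi z - 3 * m) * / z ^ 4) by ring.
    apply Rmult_le_compat_r; [left; now apply Rinv_0_lt_compat |].
    apply Rmult_le_compat; [lra | nra | exact HEz | unfold u in *; lra].
Qed.

Lemma A_derivative_pos (xi0 z : R) : filterlim (xiF phi) (at_right 0) (locally xi0) ->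
  3 * m > xi0 -> 0 < z -> 0 < AF phi m z ->
  0 < 4 * z * improper_int A_integrand z - 2 * z ^ 2 * A_integrand z.
Proof.
  intros Hxi Hm Hz HA. unfold AF in HA. fold A_integrand in HA.
  assert (Hz2 : 0 < z ^ 2) by (apply pow_lt; lra).
  assert (HJ : 0 < improper_int A_integrand z).
  { apply (Rmult_lt_reg_l (2 * z ^ 2)); lra. }
  assert (HE : 0 < exp (PhiF phi z)) by apply exp_pos.
  assert (Hz4 : 0 < z ^ 4) by (apply pow_lt; lra).
  destruct (Rle_or_lt (xiF phi z - 3 * m) 0) as [Hu | Hu].
  - assert (A_integrand z <= 0).
    { unfold A_integrand, Rdiv. rewrite Rmult_assoc.
      apply Rmult_le_0_r; [lra |].
      apply Rmult_le_pos; [left; now apply Rinv_0_lt_compat | lra]. }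
    nra.
  - assert (Hlow := A_integral_lower_bound z Hz Hu).
    assert (Hlim := xi_sub_le_lim xi0 z Hxi Hz).
    set (E := exp (PhiF phi z)) in *. set (u := xiF phi z - 3 * m) in *.
    assert (Hg : A_integrand z = u / z ^ 4 * E) by reflexivity.
    rewrite Hg.
    (* [A'(z) >= 2 E (z E - u) / (3 z^2)], and [z E - u > 0] by [xi_sub_le_lim]. *)
    apply Rlt_le_trans with
      (4 * z * (E * (u / (3 * z ^ 3) + E / (6 * z ^ 2))) - 2 * z ^ 2 * (u / z ^ 4 * E)).
    + replace (4 * z * (E * (u / (3 * z ^ 3) + E / (6 * z ^ 2))) - 2 * z ^ 2 * (u / z ^ 4 * E))
        with (2 * E * (E * z - u) / (3 * z ^ 2)) by (field; lra).
      apply Rdiv_lt_0_compat; [apply Rmult_lt_0_compat; unfold u in *; nra | lra].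
    + unfold Rminus. apply Rplus_le_compat_r, Rmult_le_compat_l; [lra | exact Hlow].
Qed.

Lemma A_increasing_where_positive (xi0 a : R) :
  filterlim (xiF phi) (at_right 0) (locally xi0) -> 3 * m > xi0 -> 0 < a ->
  (forall r, a < r -> 0 < AF phi m r) ->
  forall x y, a < x -> x < y -> AF phi m x < AF phi m y.
Proof.
  intros Hxi Hm Ha HA x y Hx Hxy.
  apply (incr_function (AF phi m) a p_infty
           (fun z => 4 * z * improper_int A_integrand z - 2 * z ^ 2 * A_integrand z));
    simpl; try easy; intros z Hz _.
  - apply is_derive_A. lra.
  - apply (A_derivative_pos xi0); [exact Hxi | exact Hm | lra | now apply HA].
Qed.

End Quadratures.

Lemma continuous_Derive_of_C2 phi :
  C2_on_nonneg phi -> forall x, 0 < x -> continuous (Derive phi) x.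
Proof.
  intros [f1 [f2 [Hd1 [Hd2 _]]]] x Hx.
  apply continuous_ext_loc with f1.
  - apply (filter_imp (fun t => 0 < t)); [| exact (open_gt 0 x Hx)].
    intros t Ht. symmetry. apply is_derive_unique, Hd1, Ht.
  - apply continuous_of_ex_derive. exists (f2 x). now apply Hd2.
Qed.

Theorem proposition1 (phi : R -> R) (alpha m xi0 rh : R) :
  C2_on_nonneg phi ->
  strictly_monotonic_nonneg phi ->
  (exists x, 0 <= x /\ phi x <> 0) ->
  0 < alpha ->
  bigO_decay phi alpha ->
  (* the improper integrals defining Phi and xi converge for r > 0 *)
  (forall r, 0 < r -> improper_int_conv (fun s => (Derive phi s) ^ 2 * s) r) ->
  (forall r, 0 < r -> improper_int_conv (fun s => 1 - exp (PhiF phi s)) r) ->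
  (* xi0 = xi(0) := lim_{r -> 0+} xi(r) *)
  filterlim (xiF phi) (at_right 0) (locally xi0) ->
  3 * m > xi0 ->
  0 < rh ->
  fF phi m rh = 0 ->
  (forall r, rh < r -> 0 < fF phi m r) ->
  forall x y, rh < x -> x < y -> AF phi m x < AF phi m y.
Proof.
  intros HC2 _ _ _ _ HPhi Hxi Hlim Hm Hrh _ Hf.
  apply (A_increasing_where_positive phi (continuous_Derive_of_C2 phi HC2) HPhi Hxi m xi0);
    [exact Hlim | exact Hm | exact Hrh |].
  intros r Hr. apply (Rmult_lt_reg_l (exp (-2 * PhiF phi r))); [apply exp_pos |].
  rewrite Rmult_0_r. now apply Hf.
Qed.
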